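(* Let $\mathcal{L} = \prod_{i=1}^{r} C(n_i)$ be a product of chain lattices (a square lattice), let $\beta = (\rho, \ldots, \rho, b, \rho, \ldots, \rho)$ where $b$ is the maximal element of the factor $C(n_i)$ in some position $i$ and every other coordinate is the minimum $\rho$ of its chain (so $\beta$ is a maximal join-irreducible element of $\mathcal{L}$), let $B_\beta = \mathcal{L} \setminus \mathcal{L}_\beta = \{\gamma \in \mathcal{L} : \gamma \geq \beta\}$, and let $\alpha \in \mathcal{L}_\beta$. Then \[ |E_\alpha| - |E_\alpha(\mathcal{L}_\beta)| \geq |B_\beta| - 1. \]
   Context: $C(n)$ is the chain (totally ordered) lattice with $n$ elements; the product carries the componentwise order. $\mathcal{L}_\beta = \{\gamma \in \mathcal{L} : \gamma \not\geq \beta\}$ (the pruning of $\mathcal{L}$ at $\beta$, i.e. the lattice of hereditary subsets of the join-irreducible poset with $\beta$ removed). A diamond in a lattice $\mathcal{M}$ is a set $\{x, y, x\vee y, x\wedge y\}$ with $x, y \in \mathcal{M}$ non-comparable. For $\alpha \in \mathcal{M}$, $E_\alpha(\mathcal{M}) = \{(\alpha,\gamma) : \text{some diamond of } \mathcal{M} \text{ contains both } \alpha \text{ and } \gamma\}$, and $E_\alpha = E_\alpha(\mathcal{L})$. *)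

From mathcomp Require Import all_boot all_order all_algebra.
Set Implicit Arguments. Unset Strict Implicit. Unset Printing Implicit Defensive.

(* The square lattice L = prod_{j < r} C(n j); C(m) is the chain 'I_m
   = {0 < 1 < ... < m-1}. Elements are dependent finite functions. *)
Definition sqlat (r : nat) (n : 'I_r -> nat) : finType :=
  {dffun forall j : 'I_r, 'I_(n j)}.

Section SqLat.
Variables (r : nat) (n : 'I_r -> nat).

Definition sq_le (x y : sqlat n) : bool := [forall j, (x j <= y j)%N].

Definition sq_join (x y : sqlat n) : sqlat n :=
  [ffun j => if (x j <= y j)%N then y j else x j].
Definition sq_meet (x y : sqlat n) : sqlat n :=
  [ffun j => if (x j <= y j)%N then x j else y j].

Definition sq_noncomparable (x y : sqlat n) : bool :=
  ~~ sq_le x y && ~~ sq_le y x.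

Definition diamond_set (x y : sqlat n) : {set sqlat n} :=
  [set x; y; sq_join x y; sq_meet x y].

(* M is used with the lattice operations of L (L and L_beta are sublattices). *)
Definition E_alpha (M : {set sqlat n}) (a : sqlat n) : {set sqlat n * sqlat n} :=
  [set p | (p.1 == a) &&
     [exists x in M, exists y in M,
        [&& sq_noncomparable x y, a \in diamond_set x y & p.2 \in diamond_set x y]]].

(* pruning L_beta = {gamma : ~ gamma >= beta} and B_beta = {gamma : gamma >= beta} *)
Definition prune (beta : sqlat n) : {set sqlat n} := [set g | ~~ sq_le beta g].
Definition Bset (beta : sqlat n) : {set sqlat n} := [set g | sq_le beta g].

End SqLat.

From mathcomp Require Import all_boot all_order all_algebra.
Import GRing.Theory Num.Theory.

Set Implicit Arguments.
Unset Strict Implicit.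

(* The elements above beta are exactly those whose i-th coordinate is the top
   of the chain C(n i).  Since L_beta is a sublattice, no diamond of L_beta
   reaches B_beta, so for gamma in B_beta the pair (alpha, gamma) lies in
   E_alpha but not in E_alpha(L_beta).  It does lie in E_alpha unless gamma is
   alpha with its i-th coordinate raised to the top: if gamma is not above
   alpha, the two are non-comparable; otherwise gamma exceeds alpha in
   coordinate i and in some other coordinate j, and splitting the increase
   between these two coordinates gives a diamond with bottom alpha and top
   gamma. *)

Section SquareLattice.
Variables (r : nat) (n : 'I_r -> nat).
Implicit Types (a g x y z : sqlat n) (M N : {set sqlat n}).

Definition sq_splice (i : 'I_r) x y : sqlat n :=
  [ffun j => if j == i then x j else y j].

Lemma sq_spliceE i x y j : sq_splice i x y j = if j == i then x j else y j.
Proof. by rewrite ffunE. Qed.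

Lemma diamond_coord_le j x y z :
  z \in diamond_set x y -> (z j <= maxn (x j) (y j))%N.
Proof.
rewrite !inE -!orbA => /or4P[] /eqP ->; rewrite ?ffunE ?leq_maxl ?leq_maxr //.
  by case: ifP; rewrite ?leq_maxl ?leq_maxr.
by case: ifP => _; rewrite ?leq_maxl ?leq_maxr // leq_max leq_maxl.
Qed.

Lemma E_alphaS M N a : M \subset N -> E_alpha M a \subset E_alpha N a.
Proof.
move=> sMN; apply/subsetP => p; rewrite !inE => /andP[->].
case/exists_inP => x Mx /exists_inP[y My diam_xy].
apply/exists_inP; exists x; first exact: subsetP Mx.
by apply/exists_inP; exists y; first exact: subsetP My.
Qed.

Lemma E_alpha_setT_noncomparable a g :
  sq_noncomparable a g -> (a, g) \in E_alpha [set: sqlat n] a.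
Proof.
move=> nc_ag; rewrite inE eqxx /=; apply/exists_inP; exists a; rewrite ?inE //.
by apply/exists_inP; exists g; rewrite ?inE ?nc_ag ?eqxx ?orbT.
Qed.

Lemma E_alpha_setT_two_coords a g i j : sq_le a g -> i != j ->
  (a i < g i)%N -> (a j < g j)%N -> (a, g) \in E_alpha [set: sqlat n] a.
Proof.
move=> /forallP le_ag neq_ij lt_i lt_j.
set x := sq_splice i g a; set y := sq_splice i a g.
have meet_xy : sq_meet x y = a.
  apply/ffunP => k; rewrite !ffunE; case: eqP => [->|_]; first by rewrite leqNgt lt_i.
  by rewrite le_ag.
have join_xy : sq_join x y = g.
  apply/ffunP => k; rewrite !ffunE; case: eqP => [->|_]; first by rewrite leqNgt lt_i.
  by rewrite le_ag.
have nc_xy : sq_noncomparable x y.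
  apply/andP; split; apply/forallPn.
    by exists i; rewrite !sq_spliceE eqxx -ltnNge.
  by exists j; rewrite !sq_spliceE eq_sym (negbTE neq_ij) -ltnNge.
rewrite inE eqxx /=; apply/exists_inP; exists x; rewrite ?inE //.
apply/exists_inP; exists y; rewrite ?inE //.
by rewrite nc_xy /= meet_xy join_xy !eqxx !orbT.
Qed.

Section MaximalJoinIrreducible.
Variables (i : 'I_r) (beta : sqlat n).
Hypothesis beta_coord : forall j, (beta j : nat) = (if j == i then (n i).-1 else 0%N).

Lemma sq_le_betaE g : sq_le beta g = ((n i).-1 <= g i)%N.
Proof.
apply/forallP/idP => [/(_ i)|le_top j]; first by rewrite beta_coord eqxx.
by rewrite beta_coord; case: eqP => [->|].
Qed.

Lemma mem_BsetE g : (g \in Bset beta) = (g i == (n i).-1 :> nat).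
Proof.
rewrite inE sq_le_betaE eqn_leq andb_idl // => _.
by rewrite -ltnS prednK ?ltn_ord // (leq_ltn_trans _ (ltn_ord (g i))).
Qed.

Lemma mem_pruneE g : (g \in prune beta) = (g i < (n i).-1)%N.
Proof. by rewrite inE sq_le_betaE ltnNge. Qed.

Lemma diamond_prune x y z : x \in prune beta -> y \in prune beta ->
  z \in diamond_set x y -> z \in prune beta.
Proof.
rewrite !mem_pruneE => x_low y_low /(diamond_coord_le i) z_le.
by apply: leq_ltn_trans z_le _; rewrite gtn_max x_low.
Qed.

Lemma Bset_notin_E_alpha_prune a g :
  g \in Bset beta -> (a, g) \notin E_alpha (prune beta) a.
Proof.
rewrite mem_BsetE => /eqP g_top; rewrite inE negb_and orbC; apply/orP; left.
apply/exists_inP => -[x Px /exists_inP[y Py /and3P[_ _ /= dg]]].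
by move: (diamond_prune Px Py dg); rewrite mem_pruneE g_top ltnn.
Qed.

Lemma Bset_in_E_alpha a g : a \in prune beta -> g \in Bset beta ->
  g != sq_splice i beta a -> (a, g) \in E_alpha [set: sqlat n] a.
Proof.
rewrite mem_pruneE mem_BsetE => a_low /eqP g_top g_raise.
have lt_i : (a i < g i)%N by rewrite g_top.
have [le_ag|nle_ag] := boolP (sq_le a g); last first.
  apply: E_alpha_setT_noncomparable; rewrite /sq_noncomparable nle_ag /=.
  by apply/forallPn; exists i; rewrite -ltnNge.
have [j neq_ji lt_j] : exists2 j, j != i & (a j < g j)%N.
  apply/exists_inP; apply: contraNT g_raise => /exists_inPn eq_off_i.
  apply/eqP/ffunP => j; apply/val_inj; rewrite sq_spliceE.
  case: eqP => [->|/eqP neq_ji]; first by rewrite /= g_top beta_coord eqxx.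
  by apply/eqP; rewrite eqn_leq leqNgt eq_off_i //; move/forallP: le_ag => ->.
by apply: (E_alpha_setT_two_coords le_ag _ lt_i lt_j); rewrite eq_sym.
Qed.

End MaximalJoinIrreducible.
End SquareLattice.

Theorem mainTheorem10 (r : nat) (n : 'I_r -> nat) (i : 'I_r) (beta : sqlat n)
  (hbeta : forall j : 'I_r, (beta j : nat) = (if j == i then (n i).-1 else 0%N))
  (alpha : sqlat n) (halpha : alpha \in prune beta) :
  ((#|E_alpha [set: sqlat n] alpha|%:Z - #|E_alpha (prune beta) alpha|%:Z)
     >= #|Bset beta|%:Z - 1)%R.
Proof.
set EL := E_alpha _ alpha; set EP := E_alpha _ alpha.
set raised := sq_splice i beta alpha.
have pairs_sub : [set (alpha, g) | g in Bset beta :\ raised] \subset EL :\: EP.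
  apply/subsetP => _ /imsetP[g /setD1P[g_raise Bg] ->].
  by rewrite inE (Bset_notin_E_alpha_prune hbeta) ?(Bset_in_E_alpha hbeta).
have card_pairs : #|Bset beta :\ raised| <= #|EL :\: EP|.
  have pair_inj : injective (@pair _ (sqlat n) alpha) by move=> u v [].
  by rewrite -(card_imset _ pair_inj) subset_leq_card.
have card_EL : #|EL| = (#|EL :\: EP| + #|EP|)%N.
  by rewrite -(cardsID EP EL) addnC (setIidPr (E_alphaS _ (subsetT _))).
rewrite card_EL PoszD addrK lerBlDr -PoszD lez_nat (cardsD1 raised) addnC.
exact: leq_add card_pairs (leq_b1 _).
Qed.
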